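(* Let $G\le\mathrm{O}(d)$ have closed orbits. For all $x,y\in\mathbb{R}^d$ there exists a bijection from $C([x],[y])$ to the set of orbits of the group $\mathrm{stab}_G(x)$ acting on $\arg\min_{q\in[y]}\|q-x\|$.
   Context: For $x\in\mathbb{R}^d$, $[x]:=\{gx:g\in G\}$, and $\mathbb{R}^d/G$ has the quotient metric $d([x],[y]):=\inf_{p\in[x],q\in[y]}\|p-q\|$. In a metric space $(M,d)$, a curve $\gamma:[0,L]\to M$ with $L\ge0$ is a minimal geodesic if $d(\gamma(s),\gamma(t))=|s-t|$ for all $s,t\in[0,L]$; for $a,b\in M$, $C(a,b)$ is the set of minimal geodesics $\gamma$ with $\gamma(0)=a$ and $\gamma(L)=b$ (so $L=d(a,b)$). The group $\mathrm{stab}_G(x)$ acts on $\arg\min_{q\in[y]}\|q-x\|$ by $q\mapsto gq$. *)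

From mathcomp Require Import all_boot all_order all_algebra.
From mathcomp Require Import all_classical reals.
Set Implicit Arguments. Unset Strict Implicit. Unset Printing Implicit Defensive.
Import Order.TTheory GRing.Theory Num.Theory.
Local Open Scope classical_set_scope.
Local Open Scope ring_scope.

Section Defs.
Variables (R : realType) (d : nat).

(* R^d as column vectors; G acts by left matrix multiplication. *)
Definition enorm (v : 'cV[R]_d) : R := Num.sqrt (\sum_(i < d) v i 0 ^+ 2).

Definition orthogonal_mx (g : 'M[R]_d) : Prop := g^T *m g = 1%:M.

Definition subgroup_Od (G : set 'M[R]_d) : Prop :=
  [/\ (forall g, G g -> orthogonal_mx g), G 1%:M,
      (forall g h, G g -> G h -> G (g *m h)) &
      (forall g, G g -> G (g^T))].

Definition gorbit (G : set 'M[R]_d) (x : 'cV[R]_d) : set 'cV[R]_d :=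
  [set g *m x | g in G].

Definition eclosed (S : set 'cV[R]_d) : Prop :=
  forall z, (forall e : R, 0 < e -> exists p, S p /\ enorm (p - z) < e) -> S z.

Definition closed_orbits (G : set 'M[R]_d) : Prop :=
  forall x, eclosed (gorbit G x).

(* points of R^d/G are orbits *)
Definition is_orbit (G : set 'M[R]_d) (S : set 'cV[R]_d) : Prop :=
  exists x, S = gorbit G x.

Definition qdist (S T : set 'cV[R]_d) : R :=
  inf [set r | exists p q, S p /\ T q /\ r = enorm (p - q)].

Definition Icc (L : R) := {t : R | 0 <= t <= L}.

Definition min_geodesic (G : set 'M[R]_d) (L : R)
    (gam : Icc L -> set 'cV[R]_d) : Prop :=
  (forall t, is_orbit G (gam t)) /\
  (forall s t : Icc L, qdist (gam s) (gam t) = `|sval s - sval t|).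

Definition geodesics (G : set 'M[R]_d) (a b : set 'cV[R]_d)
    : set (Icc (qdist a b) -> set 'cV[R]_d) :=
  [set gam | min_geodesic G gam /\
     (forall t : Icc (qdist a b), sval t = 0 -> gam t = a) /\
     (forall t : Icc (qdist a b), sval t = qdist a b -> gam t = b)].

Definition stab (G : set 'M[R]_d) (x : 'cV[R]_d) : set 'M[R]_d :=
  [set g | G g /\ g *m x = x].

Definition argmin_orbit (G : set 'M[R]_d) (x y : 'cV[R]_d) : set 'cV[R]_d :=
  [set q | gorbit G y q /\
     (forall q', gorbit G y q' -> enorm (q - x) <= enorm (q' - x))].

Definition stab_orbits (G : set 'M[R]_d) (x y : 'cV[R]_d)
    : set (set 'cV[R]_d) :=
  [set O | exists q, argmin_orbit G x y q /\ O = [set g *m q | g in stab G x]].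

End Defs.
Arguments geodesics {R d} G a b.

(* Write L = d([x],[y]). A closest point q of [y] to x yields the minimal geodesic
   t |-> [x + (t/L)(q - x)], and this geodesic only depends on the stab_G(x)-orbit of q.
   Conversely, lift the midpoint of a minimal geodesic to m with ||m - x|| = L/2 and take
   q in [y] closest to m: equality in the triangle inequality for x, m, q makes m the
   midpoint of [x, q], and the same equality argument, applied to closest lifts of the
   other points of the geodesic, puts them all on the segment [x, q]. If two closest
   points q, q' give the same geodesic, the midpoints of [x, q] and [x, q'] are related
   by some g in G; since a midpoint of a minimal segment determines the segment, g fixes
   x and maps q' to q. Closed orbits are compact, which makes closest points exist. *)

From mathcomp Require Import all_boot all_order all_algebra.
From mathcomp Require Import all_classical reals topology normedtype derive.
From mathcomp Require Import ring lra.
Set Implicit Arguments. Unset Strict Implicit. Unset Printing Implicit Defensive.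
Import Order.TTheory GRing.Theory Num.Theory.
Import numFieldNormedType.Exports.
Local Open Scope classical_set_scope.
Local Open Scope ring_scope.

Section Euclidean.
Variables (R : realType) (d : nat).
Local Notation V := 'cV[R]_d.
Implicit Types u v a b p : V.

Definition dotv u v : R := \sum_(i < d) u i 0 * v i 0.

Lemma dotvv_ge0 u : 0 <= dotv u u.
Proof. by apply: sumr_ge0 => i _; rewrite -expr2 sqr_ge0. Qed.

Lemma dotvv0_eq0 u : dotv u u = 0 -> u = 0.
Proof.
move=> /eqP; rewrite psumr_eq0 => [/allP u0|i _]; last by rewrite -expr2 sqr_ge0.
apply/matrixP => i j; rewrite ord1 mxE.
by have := u0 i (mem_index_enum i); rewrite /= mulf_eq0 orbb => /eqP.
Qed.

Lemma dotv_mx u v : dotv u v = (u^T *m v) 0 0.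
Proof. by rewrite mxE; apply: eq_bigr => i _; rewrite mxE. Qed.

Lemma dotv_lincomb s t u v :
  dotv (s *: u + t *: v) (s *: u + t *: v) =
  s ^+ 2 * dotv u u + 2 * s * t * dotv u v + t ^+ 2 * dotv v v.
Proof.
by rewrite /dotv !mulr_sumr -!big_split /=; apply: eq_bigr => i _; rewrite !mxE; ring.
Qed.

Lemma enormE u : enorm u = Num.sqrt (dotv u u).
Proof. by congr Num.sqrt; apply: eq_bigr => i _; rewrite expr2. Qed.

Lemma enorm_sqr u : enorm u ^+ 2 = dotv u u.
Proof. by rewrite enormE sqr_sqrtr // dotvv_ge0. Qed.

Lemma enorm_ge0 u : 0 <= enorm u.
Proof. exact: sqrtr_ge0. Qed.

Lemma enorm0_eq0 u : enorm u = 0 -> u = 0.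
Proof. by move=> u0; apply: dotvv0_eq0; rewrite -enorm_sqr u0 expr0n. Qed.

Lemma enorm0 : enorm (0 : V) = 0.
Proof. by rewrite /enorm big1 ?sqrtr0 // => i _; rewrite mxE expr0n. Qed.

Lemma enormZ s u : enorm (s *: u) = `|s| * enorm u.
Proof.
rewrite /enorm (eq_bigr (fun i => s ^+ 2 * u i 0 ^+ 2)) => [|i _]; last first.
  by rewrite mxE exprMn.
by rewrite -mulr_sumr sqrtrM ?sqr_ge0 // sqrtr_sqr.
Qed.

Lemma enorm_distC u v : enorm (u - v) = enorm (v - u).
Proof. by rewrite -opprB -scaleN1r enormZ normrN normr1 mul1r. Qed.

Lemma enorm_mx_orth (g : 'M[R]_d) u : orthogonal_mx g -> enorm (g *m u) = enorm u.
Proof.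
by move=> gTg; rewrite !enormE !dotv_mx trmx_mul -mulmxA (mulmxA g^T) gTg mul1mx.
Qed.

(* Both Cauchy-Schwarz and its equality case are read off this identity. *)
Lemma enorm_sqr_cross u v :
  enorm (enorm v *: u - enorm u *: v) ^+ 2 =
  2 * (enorm u * enorm v) * (enorm u * enorm v - dotv u v).
Proof.
by rewrite -scaleNr enorm_sqr dotv_lincomb -!enorm_sqr; ring.
Qed.

Lemma enorm_sqrD u v :
  enorm (u + v) ^+ 2 = enorm u ^+ 2 + 2 * dotv u v + enorm v ^+ 2.
Proof.
have -> : u + v = 1 *: u + 1 *: v by rewrite !scale1r.
by rewrite enorm_sqr dotv_lincomb !enorm_sqr; ring.
Qed.

Lemma dotv_le u v : dotv u v <= enorm u * enorm v.
Proof.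
have [/eqP|ab0] := eqVneq (enorm u * enorm v) 0.
  rewrite mulf_eq0 => /orP[]/eqP/enorm0_eq0->;
    by rewrite enorm0 (mul0r, mulr0) /dotv big1 // => i _; rewrite mxE (mul0r, mulr0).
have ab_gt0 : 0 < enorm u * enorm v by rewrite lt_def ab0 mulr_ge0 ?enorm_ge0.
have := sqr_ge0 (enorm (enorm v *: u - enorm u *: v)).
by rewrite enorm_sqr_cross pmulr_rge0 ?subr_ge0 // mulr_gt0.
Qed.

Lemma enormD u v : enorm (u + v) <= enorm u + enorm v.
Proof.
rewrite -(ler_pXn2r (_ : 0 < 2)%N) ?nnegrE ?addr_ge0 ?enorm_ge0 //.
by rewrite enorm_sqrD sqrrD lerD2r lerD2l -[X in _ <= X]mulr_natl ler_pM2l ?dotv_le.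
Qed.

Lemma ler_enorm_dist_dist u v : `|enorm u - enorm v| <= enorm (u - v).
Proof.
have tri (w w' : V) : enorm w <= enorm (w - w') + enorm w'.
  by rewrite -{1}(subrK w' w) enormD.
have := tri u v; have := tri v u; rewrite [enorm (v - u)]enorm_distC ler_norml => h1 h2.
by apply/andP; split; lra.
Qed.

Lemma enormD_collinear u v : enorm u + enorm v <= enorm (u + v) ->
  enorm v *: u = enorm u *: v.
Proof.
rewrite -(ler_pXn2r (_ : 0 < 2)%N) ?nnegrE ?addr_ge0 ?enorm_ge0 //.
rewrite enorm_sqrD sqrrD lerD2r lerD2l -[X in X <= _]mulr_natl ler_pM2l // => ab_le.
apply/eqP; rewrite -subr_eq0; apply/eqP/enorm0_eq0/eqP.
rewrite -sqrf_eq0 eq_le sqr_ge0 andbT enorm_sqr_cross.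
by rewrite mulr_ge0_le0 ?mulr_ge0 ?enorm_ge0 // subr_le0.
Qed.

Definition lerp a b (t : R) : V := a + t *: (b - a).

Lemma lerp0 a b : lerp a b 0 = a.
Proof. by rewrite /lerp scale0r addr0. Qed.

Lemma lerpxx a t : lerp a a t = a.
Proof. by rewrite /lerp subrr scaler0 addr0. Qed.

Lemma lerp1 a b : lerp a b 1 = b.
Proof. by rewrite /lerp scale1r addrC subrK. Qed.

Lemma lerpC a b t : lerp b a (1 - t) = lerp a b t.
Proof. by apply/matrixP => i j; rewrite !mxE; ring. Qed.

Lemma lerp_lerp a b s t : lerp a (lerp a b s) t = lerp a b (t * s).
Proof. by apply/matrixP => i j; rewrite !mxE; ring. Qed.

Lemma mulmx_lerp (g : 'M[R]_d) a b t : g *m lerp a b t = lerp (g *m a) (g *m b) t.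
Proof. by rewrite /lerp mulmxDr -scalemxAr mulmxBr. Qed.

Lemma enorm_lerpB a b s t :
  enorm (lerp a b s - lerp a b t) = `|s - t| * enorm (b - a).
Proof.
rewrite -enormZ; congr enorm; apply/matrixP => i j; rewrite !mxE; ring.
Qed.

Lemma enorm_lerpBl a b t : enorm (lerp a b t - a) = `|t| * enorm (b - a).
Proof. by rewrite -{2}(lerp0 a b) enorm_lerpB subr0. Qed.

Lemma enorm_lerpBr a b t : enorm (b - lerp a b t) = `|1 - t| * enorm (b - a).
Proof. by rewrite -{1}(lerp1 a b) enorm_lerpB. Qed.

Lemma enorm_lerp_halfBl a b : enorm (lerp a b (1 / 2) - a) = enorm (b - a) / 2.
Proof. by rewrite enorm_lerpBl ger0_norm ?divr_ge0 // mul1r mulrC. Qed.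

Lemma enorm_lerp_halfBr a b : enorm (b - lerp a b (1 / 2)) = enorm (b - a) / 2.
Proof.
rewrite enorm_lerpBr (_ : 1 - 1 / 2 = 1 / 2); last lra.
by rewrite -enorm_lerpBl enorm_lerp_halfBl.
Qed.

Lemma lerp_half_injl a a' b : lerp a b (1 / 2) = lerp a' b (1 / 2) -> a = a'.
Proof.
move/matrixP=> E; apply/matrixP => i j; move: (E i j); rewrite !mxE; lra.
Qed.

Lemma lerp_half_injr a b b' : lerp a b (1 / 2) = lerp a b' (1 / 2) -> b = b'.
Proof.
move/matrixP=> E; apply/matrixP => i j; move: (E i j); rewrite !mxE; lra.
Qed.

Lemma triangle_eq_lerp a p b (s t : R) :
  enorm (p - a) <= s -> enorm (b - p) <= t -> s + t <= enorm (b - a) ->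
  0 < s + t -> p = lerp a b (s / (s + t)).
Proof.
move=> ps bt st st_gt0.
have tri : enorm (b - a) <= enorm (p - a) + enorm (b - p).
  have -> : b - a = (b - p) + (p - a) by rewrite addrA subrK.
  by rewrite [X in _ <= X]addrC enormD.
have ps_eq : enorm (p - a) = s by apply/eqP; rewrite eq_le ps /=; lra.
have bt_eq : enorm (b - p) = t by apply/eqP; rewrite eq_le bt /=; lra.
have /matrixP col : t *: (p - a) = s *: (b - p).
  by rewrite -ps_eq -bt_eq enormD_collinear // [_ + (b - p)]addrC addrA subrK; lra.
apply/matrixP => i j; move: (col i j); rewrite !mxE => {}col.
apply: (mulfI (lt0r_neq0 st_gt0)); rewrite mulrDr mulrA mulrCA divff ?gt_eqF //.
by rewrite mulr1; lra.
Qed.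

Lemma midpoint_eq_lerp a m b (l : R) :
  enorm (m - a) <= l / 2 -> enorm (b - m) <= l / 2 -> l <= enorm (b - a) ->
  0 < l -> m = lerp a b (1 / 2).
Proof.
move=> ma bm ab l0; rewrite (@triangle_eq_lerp a m b (l / 2) (l / 2)) //; last lra.
  by congr lerp; rewrite -splitr mulrAC divff ?gt_eqF.
by rewrite -splitr.
Qed.

End Euclidean.

Lemma mx_norm_entry (R : realType) m n (u : 'M[R]_(m, n)) i j : `|u i j| <= `|u|.
Proof.
rewrite (_ : `|u| = mx_norm u) // mx_normrE.
exact: (le_bigmax _ (fun ij => `|u ij.1 ij.2|) (i, j)).
Qed.

Lemma mx_norm_le (R : realType) m n (u : 'M[R]_(m, n)) M :
  0 <= M -> (forall i j, `|u i j| <= M) -> `|u| <= M.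
Proof.
move=> M0 uM; rewrite (_ : `|u| = mx_norm u) // mx_normrE.
by apply: bigmax_le => // -[i j] _; apply: uM.
Qed.

Section NearestPoint.
Variables (R : realType) (d : nat).
Local Notation V := 'cV[R]_d.

Lemma entry_le_enorm (u : V) i : `|u i 0| <= enorm u.
Proof.
rewrite -sqrtr_sqr ler_sqrt; last by apply: sumr_ge0 => j _; rewrite sqr_ge0.
by rewrite (bigD1 i) //= lerDl sumr_ge0 // => j _; rewrite sqr_ge0.
Qed.

Lemma enorm_le_entries (u : V) (e : R) :
  0 <= e -> (forall i, `|u i 0| <= e) -> enorm u <= Num.sqrt d%:R * e.
Proof.
move=> e0 ue; rewrite -(ger0_norm e0) -sqrtr_sqr -sqrtrM ?ler0n // ler_sqrt; last first.
  by rewrite mulr_ge0 ?ler0n ?sqr_ge0.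
rewrite mulr_natl -[d in _ *+ d]card_ord -sumr_const ler_sum // => i _.
by rewrite -real_normK ?num_real // lerXn2r ?nnegrE // ue.
Qed.

Lemma enorm_trmx_le (u : 'rV[R]_d) : enorm u^T <= Num.sqrt d%:R * `|u|.
Proof. by apply: enorm_le_entries => // i; rewrite mxE mx_norm_entry. Qed.

Lemma near_enorm_trmx (z : 'rV[R]_d) e :
  0 < e -> \forall v \near z, enorm (v^T - z^T) < e.
Proof.
move=> e0; set c := Num.sqrt (d%:R : R).
have c0 : 0 <= c by apply: sqrtr_ge0.
have del0 : 0 < e / (c + 1) by rewrite divr_gt0 // ltr_wpDl.
apply: filterS (nbhsx_ballx z _ del0) => v; rewrite -ball_normE /= distrC => zv.
rewrite -linearB /=; apply: (le_lt_trans (enorm_trmx_le _)).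
have -> : e = (c + 1) * (e / (c + 1)) by rewrite mulrC divfK // gt_eqF // ltr_wpDl.
apply: (le_lt_trans (y := c * (e / (c + 1)))); first by rewrite ler_wpM2l // ltW.
by rewrite ltr_pM2r // ltrDl.
Qed.

(* [bounded_closed_compact] is only available for row vectors, hence the transposes. *)
Lemma nearest_point (S : set V) (a : V) M :
  eclosed S -> S !=set0 -> (forall p, S p -> enorm p <= M) ->
  exists2 q, S q & forall p, S p -> enorm (q - a) <= enorm (p - a).
Proof.
move=> Scl [p0 Sp0] SM; pose A := [set v : 'rV[R]_d | S v^T].
have A0 : A !=set0 by exists p0^T; rewrite /A /= trmxK.
have M0 : 0 <= M by apply: le_trans (SM _ Sp0); apply: enorm_ge0.
have Abd : bounded_set A.
  apply: filterS (nbhs_pinfty_ge (num_real M)) => N MN v Av.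
  apply: le_trans MN; apply: mx_norm_le => // i j; rewrite ord1.
  by have := entry_le_enorm v^T j; rewrite mxE => /le_trans; apply; apply: SM.
have Acl : closed A.
  move=> z Az; apply: Scl => e e0.
  by have [v [Av vz]] := Az _ (near_enorm_trmx z e0); exists v^T.
have fcont : {within A, continuous (fun v : 'rV[R]_d => enorm (v^T - a))}.
  apply: continuous_subspaceT => z; apply/(@cvgrPdist_lt _ _ _ (nbhs z)) => e e0.
  apply: filterS (near_enorm_trmx z e0) => v; apply: le_lt_trans.
  apply: le_trans (ler_enorm_dist_dist _ _) _.
  by rewrite opprB addrA subrK enorm_distC.
have [c Ac cmin] := compact_EVT_min A0 (bounded_closed_compact Abd Acl) fcont.
exists c^T; first by move: Ac; rewrite inE.
by move=> p Sp; rewrite -[p]trmxK; apply: cmin; rewrite inE /A /= trmxK.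
Qed.

End NearestPoint.

Lemma qdist_le (R : realType) d (S T : set 'cV[R]_d) p q :
  S p -> T q -> qdist S T <= enorm (p - q).
Proof.
move=> Sp Tq; apply: ge_inf; last by exists p, q.
by exists 0 => _ [p' [q' [_ [_ ->]]]]; apply: enorm_ge0.
Qed.

Lemma qdistC (R : realType) d (S T : set 'cV[R]_d) : qdist S T = qdist T S.
Proof.
rewrite /qdist; congr inf; apply/seteqP; split => _ [p [q [Sp [Tq ->]]]];
  by exists q, p; rewrite enorm_distC.
Qed.

Section Orbits.
Variables (R : realType) (d : nat) (G : set 'M[R]_d).
Hypothesis HG : subgroup_Od G.
Local Notation V := 'cV[R]_d.
Local Notation "[ a ]" := (gorbit G a).
Implicit Types a b p q : V.

Lemma G_orthogonal g : G g -> g^T *m g = 1%:M.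
Proof. by case: HG => orth _ _ _ /orth. Qed.

Lemma G1 : G 1%:M.
Proof. by case: HG. Qed.

Lemma G_mul g h : G g -> G h -> G (g *m h).
Proof. by case: HG => _ _ mul _; apply: mul. Qed.

Lemma G_tr g : G g -> G g^T.
Proof. by case: HG => _ _ _; apply. Qed.

Lemma enorm_G g u : G g -> enorm (g *m u) = enorm u.
Proof. by move/G_orthogonal; apply: enorm_mx_orth. Qed.

Lemma orbit_refl a : [a] a.
Proof. by exists 1%:M; rewrite ?mul1mx //; apply: G1. Qed.

Lemma orbit_mul a p g : [a] p -> G g -> [a] (g *m p).
Proof. by case=> h Gh <- Gg; exists (g *m h); rewrite ?mulmxA //; apply: G_mul. Qed.

Lemma orbit_eq a b : [b] a -> [a] = [b].
Proof.
case=> h Gh <-; apply/seteqP; split => _ [g Gg <-]; first by apply: orbit_mul => //; exists h.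
exists (g *m h^T); first by apply: G_mul => //; apply: G_tr.
by rewrite -mulmxA (mulmxA h^T) G_orthogonal // mul1mx.
Qed.

Lemma qdist_nearest a b q : [b] q -> (forall p, [b] p -> enorm (q - a) <= enorm (p - a)) ->
  qdist [a] [b] = enorm (q - a).
Proof.
move=> bq qmin; apply/eqP; rewrite eq_le -[X in _ <= X]enorm_distC (qdist_le (orbit_refl a) bq) /=.
apply: lb_le_inf; first by exists (enorm (a - q)), a, q; split => //; apply: orbit_refl.
move=> _ [_ [p [[g Gg <-] [bp ->]]]].
rewrite -(enorm_G (g *m a - p) (G_tr Gg)) mulmxBr mulmxA G_orthogonal // mul1mx.
rewrite [X in _ <= X]enorm_distC.
by apply: qmin; apply: orbit_mul => //; apply: G_tr.
Qed.

Hypothesis Hcl : closed_orbits G.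

Lemma orbit_nearest a b :
  exists2 q, [b] q & forall p, [b] p -> enorm (q - a) <= enorm (p - a).
Proof.
apply: (@nearest_point _ _ _ a (enorm b)) => //; first by exists b; apply: orbit_refl.
by move=> _ [g Gg <-]; rewrite enorm_G.
Qed.

Lemma qdist_attained a b : exists2 q, [b] q & qdist [a] [b] = enorm (q - a).
Proof. by have [q bq qmin] := orbit_nearest a b; exists q => //; apply: qdist_nearest. Qed.

Lemma qdist_ge0 a b : 0 <= qdist [a] [b].
Proof. by have [q _ ->] := qdist_attained a b; apply: enorm_ge0. Qed.

Lemma qdist_triangle a b c : qdist [a] [c] <= qdist [a] [b] + qdist [b] [c].
Proof.
have [b' bb' ->] := qdist_attained a b; rewrite -(orbit_eq bb').
have [c' cc' ->] := qdist_attained b' c.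
apply: le_trans (qdist_le (orbit_refl a) cc') _.
by rewrite enorm_distC -[c' - a](subrKA b') [X in _ <= X]addrC enormD.
Qed.

(* Lift [z] next to the midpoint m, then lift [a] next to that point: this lift of
   [a] is within l/2 of m, so it is a itself, and the lift of [z] lies on [a, m]. *)
Lemma orbit_on_segment a b z s :
  qdist [a] [b] = enorm (b - a) -> 0 < enorm (b - a) ->
  qdist [a] [z] <= s -> qdist [z] [lerp a b (1 / 2)] <= enorm (b - a) / 2 - s ->
  [z] = [lerp a b (s / enorm (b - a))].
Proof.
set l := enorm (b - a); set m := lerp a b (1 / 2) => ab l0 az zm.
have [r zr mr] := qdist_attained m z.
have [a' aa' ra'] := qdist_attained r a.
have a'r : enorm (a' - r) <= s by rewrite -ra' (orbit_eq zr) qdistC.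
have rm : enorm (m - r) <= l / 2 - s by rewrite enorm_distC -mr qdistC.
have ma : enorm (m - a) = l / 2 by apply: enorm_lerp_halfBl.
have a'_eq : a' = a.
  apply: (@lerp_half_injl _ _ _ _ b); apply/esym/(@midpoint_eq_lerp _ _ _ _ _ l) => //.
  - rewrite -(subrKA r); apply: le_trans (enormD _ _) _.
    by rewrite enorm_distC in a'r; lra.
  - by rewrite enorm_lerp_halfBr.
  - by rewrite -ab enorm_distC; apply: qdist_le aa' (orbit_refl b).
rewrite -(orbit_eq zr); congr gorbit; rewrite a'_eq enorm_distC in a'r.
rewrite (triangle_eq_lerp a'r rm) ?ma; [|lra..].
by rewrite lerp_lerp; congr lerp; field; rewrite gt_eqF.
Qed.

End Orbits.

Lemma Icc_eq0 (R : realType) (L : R) (t : Icc L) : L = 0 -> sval t = 0.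
Proof. by case: t => t /= /andP[t0 tL] L0; apply/eqP; rewrite eq_le t0 -L0 tL. Qed.

(* For [L = 0] this holds because [t = 0], not because [L / L = 1]. *)
Lemma Icc_divK (R : realType) (L : R) (t : Icc L) : sval t / L * L = sval t.
Proof.
have [L0|L0] := eqVneq L 0; last by rewrite divfK.
by rewrite Icc_eq0 // !mul0r.
Qed.

Section Segments.
Variables (R : realType) (d : nat) (G : set 'M[R]_d).
Hypotheses (HG : subgroup_Od G) (Hcl : closed_orbits G).
Variables x y : 'cV[R]_d.
Local Notation V := 'cV[R]_d.
Local Notation "[ a ]" := (gorbit G a).
Local Notation L := (qdist [x] [y]).
Implicit Types q p : V.

Definition segment_geodesic q : Icc L -> set V :=
  fun t => [lerp x q (sval t / L)].

Lemma argmin_exists : exists q, argmin_orbit G x y q.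
Proof. by have [q yq qmin] := orbit_nearest HG Hcl x y; exists q. Qed.

Lemma enorm_argmin q : argmin_orbit G x y q -> enorm (q - x) = L.
Proof. by case=> yq qmin; rewrite (qdist_nearest HG yq qmin). Qed.

Lemma argmin_stab q g : stab G x g -> argmin_orbit G x y q -> argmin_orbit G x y (g *m q).
Proof.
move=> [Gg gx] [yq qmin]; split; first by have := orbit_mul HG yq Gg.
by move=> p yp; rewrite -{1}gx -mulmxBr (enorm_G HG) //; apply: qmin.
Qed.

Lemma argmin_qdist0 q : argmin_orbit G x y q -> L = 0 -> q = x.
Proof. by move/enorm_argmin => qx L0; apply/subr0_eq/enorm0_eq0; rewrite qx. Qed.

Lemma segment_end q : argmin_orbit G x y q -> lerp x q (L / L) = q.
Proof.
move=> xq; have [L0|L0] := eqVneq L 0; last by rewrite divff // lerp1.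
by rewrite (argmin_qdist0 xq L0) lerpxx.
Qed.

Lemma enorm_segmentB q (s t : Icc L) : argmin_orbit G x y q ->
  enorm (lerp x q (sval s / L) - lerp x q (sval t / L)) = `|sval s - sval t|.
Proof.
move=> xq; rewrite enorm_lerpB enorm_argmin // -[X in _ * X]ger0_norm ?qdist_ge0 //.
by rewrite -normrM mulrBl !Icc_divK.
Qed.

Lemma enorm_segmentBl q (t : Icc L) : argmin_orbit G x y q ->
  enorm (lerp x q (sval t / L) - x) = sval t.
Proof.
move=> xq; rewrite enorm_lerpBl enorm_argmin // -[X in _ * X]ger0_norm ?qdist_ge0 //.
by rewrite -normrM Icc_divK ger0_norm //; case/andP: (svalP t).
Qed.

Lemma enorm_segmentBr q (t : Icc L) : argmin_orbit G x y q ->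
  enorm (q - lerp x q (sval t / L)) = L - sval t.
Proof.
move=> xq; rewrite enorm_lerpBr enorm_argmin // -[X in _ * X]ger0_norm ?qdist_ge0 //.
by rewrite -normrM mulrBl mul1r Icc_divK ger0_norm // subr_ge0; case/andP: (svalP t).
Qed.

Lemma segment_geodesicP q : argmin_orbit G x y q -> geodesics G [x] [y] (segment_geodesic q).
Proof.
move=> xq; have yq : [y] q by case: xq.
split; [split|split].
- by move=> t; exists (lerp x q (sval t / L)).
- move=> s t; wlog st : s t / sval s <= sval t.
    by move=> H; have [/H//|/ltW/H] := leP (sval s) (sval t); rewrite qdistC distrC.
  rewrite /segment_geodesic ler0_norm ?subr_le0 // opprB.
  have := qdist_le (orbit_refl HG (lerp x q (sval s / L))) (orbit_refl HG (lerp x q (sval t / L))).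
  rewrite enorm_segmentB // ler0_norm ?subr_le0 // opprB => ub.
  apply/eqP; rewrite eq_le ub /=.
  have := qdist_triangle HG Hcl x (lerp x q (sval s / L)) y.
  have := qdist_triangle HG Hcl (lerp x q (sval s / L)) (lerp x q (sval t / L)) y.
  have := qdist_le (orbit_refl HG x) (orbit_refl HG (lerp x q (sval s / L))).
  have := qdist_le (orbit_refl HG (lerp x q (sval t / L))) yq.
  rewrite enorm_distC enorm_segmentBr // enorm_distC enorm_segmentBl //; lra.
- by move=> t t0; rewrite /segment_geodesic t0 mul0r lerp0.
- by move=> t tL; rewrite /segment_geodesic tL segment_end // (orbit_eq HG yq).
Qed.

Lemma segment_geodesic_stab q g : stab G x g -> segment_geodesic (g *m q) = segment_geodesic q.
Proof.
move=> [Gg gx]; apply: funext => t; rewrite /segment_geodesic -{1}gx -mulmx_lerp.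
by apply: (orbit_eq HG); exists g.
Qed.

Lemma qdist_gt0 : L != 0 -> 0 < L.
Proof. by rewrite lt_def => ->; apply: qdist_ge0. Qed.

Lemma half_qdist_Icc : 0 <= L / 2 <= L.
Proof. by have := qdist_ge0 HG Hcl x y => L0; apply/andP; split; lra. Qed.

Local Notation t_half := (exist _ (L / 2) half_qdist_Icc : Icc L).

Lemma segment_geodesic_half q : L != 0 -> segment_geodesic q t_half = [lerp x q (1 / 2)].
Proof. by move=> L0; rewrite /segment_geodesic /= mulrAC divff // mul1r. Qed.

Lemma segment_geodesic_inj q q' :
  argmin_orbit G x y q -> argmin_orbit G x y q' ->
  segment_geodesic q = segment_geodesic q' -> exists2 g, stab G x g & q = g *m q'.
Proof.
move=> xq xq' qq'; have [yq yq'] : [y] q /\ [y] q' by case: xq; case: xq'.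
have [L0|L0] := eqVneq L 0.
  exists 1%:M; first by split; [apply: G1 HG | apply: mul1mx].
  by rewrite mul1mx (argmin_qdist0 xq L0) (argmin_qdist0 xq' L0).
have Lpos := qdist_gt0 L0.
have : [lerp x q' (1 / 2)] (lerp x q (1 / 2)).
  by rewrite -segment_geodesic_half // -qq' segment_geodesic_half //; apply: orbit_refl.
case=> g Gg; rewrite mulmx_lerp => mid.
have xq_half : enorm (lerp x q (1 / 2) - x) <= L / 2.
  by rewrite enorm_lerp_halfBl enorm_argmin.
have q'_half : enorm (g *m q' - lerp (g *m x) (g *m q') (1 / 2)) <= L / 2.
  by rewrite enorm_lerp_halfBr -mulmxBr (enorm_G HG) // enorm_argmin.
have gxq_half : enorm (lerp (g *m x) (g *m q') (1 / 2) - g *m x) <= L / 2.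
  by rewrite enorm_lerp_halfBl -mulmxBr (enorm_G HG) // enorm_argmin.
have qq_half : enorm (q - lerp x q (1 / 2)) <= L / 2.
  by rewrite enorm_lerp_halfBr enorm_argmin.
have gq' : lerp x q (1 / 2) = lerp x (g *m q') (1 / 2).
  apply: (midpoint_eq_lerp (l := L)) => //; first by rewrite -mid.
  by rewrite enorm_distC; apply: qdist_le (orbit_refl HG x) (orbit_mul HG yq' Gg).
have gx : lerp x q (1 / 2) = lerp (g *m x) q (1 / 2).
  apply: (midpoint_eq_lerp (l := L)) => //; first by rewrite -mid.
  by rewrite enorm_distC; apply: qdist_le (orbit_mul HG (orbit_refl HG x) Gg) yq.
by exists g; [split=> //; apply/esym/(lerp_half_injl gx) | apply: lerp_half_injr gq'].
Qed.

Section Geodesic.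
Variable gam : Icc L -> set V.
Hypothesis geo : geodesics G [x] [y] gam.

Lemma geodesic_qdist_start t : qdist [x] (gam t) = sval t.
Proof.
have [[_ gd] [g0 _]] := geo; have /andP[t0 _] := svalP t.
have z0 : (0 : R) <= 0 <= L by rewrite lexx (qdist_ge0 HG Hcl).
by have := gd (exist _ 0 z0) t; rewrite g0 //= sub0r normrN ger0_norm.
Qed.

Lemma geodesic_qdist_end t : qdist (gam t) [y] = L - sval t.
Proof.
have [[_ gd] [_ gL]] := geo; have /andP[_ tL] := svalP t.
have zL : 0 <= L <= L by rewrite lexx (qdist_ge0 HG Hcl).
by have := gd t (exist _ L zL); rewrite (gL (exist _ L zL)) //= ler0_norm ?subr_le0 // opprB.
Qed.

Lemma geodesic_half_lift : L != 0 ->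
  exists2 q, argmin_orbit G x y q & gam t_half = [lerp x q (1 / 2)].
Proof.
move=> L0; have [[orb _] _] := geo; have [m0 gm0] := orb t_half.
have [m m0m xm] := qdist_attained HG Hcl x m0.
rewrite -(orbit_eq HG m0m) in gm0.
have [q yq mq] := qdist_attained HG Hcl m y.
have mx : enorm (m - x) = L / 2.
  by rewrite -xm -(orbit_eq HG m0m) -gm0 geodesic_qdist_start.
have qm : enorm (q - m) = L / 2.
  by rewrite -mq -gm0 geodesic_qdist_end /=; lra.
have Lq (p : V) : [y] p -> L <= enorm (p - x).
  by move=> yp; rewrite enorm_distC; apply: qdist_le (orbit_refl HG x) yp.
have m_eq : m = lerp x q (1 / 2).
  by apply: (midpoint_eq_lerp (l := L)); rewrite ?mx ?qm ?Lq ?qdist_gt0.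
exists q; last by rewrite gm0 m_eq.
split=> // p /Lq; apply: le_trans.
by rewrite -(subrKA m) (le_trans (enormD _ _)) // mx qm; lra.
Qed.

Lemma geodesic_through_half q : L != 0 -> argmin_orbit G x y q ->
  gam t_half = [lerp x q (1 / 2)] -> gam = segment_geodesic q.
Proof.
move=> L0 xq gm; have Lpos := qdist_gt0 L0; have [[orb gd] _] := geo.
have qx := enorm_argmin xq; have yq : [y] q by case: xq.
apply: funext => t; have [z gz] := orb t; rewrite gz /segment_geodesic.
have xz : qdist [x] [z] = sval t by rewrite -gz geodesic_qdist_start.
have zy : qdist [z] [y] = L - sval t by rewrite -gz geodesic_qdist_end.
have zm : qdist [z] [lerp x q (1 / 2)] = `|sval t - L / 2| by rewrite -gz -gm gd.
have -> : sval t / L = sval t / enorm (q - x) by rewrite qx.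
have [tm|mt] := lerP (sval t) (L / 2).
  apply: (orbit_on_segment HG Hcl); rewrite ?qx ?xz //.
    by rewrite (orbit_eq HG yq).
  by rewrite zm ler0_norm ?subr_le0 // opprB.
have lerp_sym : lerp q x (1 / 2) = lerp x q (1 / 2).
  by rewrite -lerpC; congr lerp; lra.
rewrite -lerpC.
have -> : 1 - sval t / enorm (q - x) = (enorm (q - x) - sval t) / enorm (x - q).
  by rewrite [enorm (x - q)]enorm_distC; field; rewrite qx gt_eqF.
apply: (orbit_on_segment HG Hcl); rewrite ?[enorm (x - q)]enorm_distC ?qx //.
- by rewrite qdistC (orbit_eq HG yq).
- by rewrite qdistC (orbit_eq HG yq) zy.
- by rewrite lerp_sym zm gtr0_norm ?subr_gt0 //; lra.
Qed.

Lemma geodesic_segment : exists2 q, argmin_orbit G x y q & gam = segment_geodesic q.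
Proof.
have [L0|L0] := eqVneq L 0; last first.
  have [q xq gm] := geodesic_half_lift L0.
  by exists q => //; apply: geodesic_through_half.
have [q xq] := argmin_exists; exists q => //; apply: funext => t.
have [_ [g0 _]] := geo.
by rewrite /segment_geodesic (argmin_qdist0 xq L0) lerpxx g0 // Icc_eq0.
Qed.

End Geodesic.

Lemma segment_geodesic_fiber q : argmin_orbit G x y q ->
  [set p | argmin_orbit G x y p /\ segment_geodesic p = segment_geodesic q] =
  [set g *m q | g in stab G x].
Proof.
move=> xq; apply/seteqP; split.
  by move=> p [xp pq]; have [g xg ->] := segment_geodesic_inj xp xq pq; exists g.
by move=> _ [g xg <-]; split; [apply: argmin_stab | apply: segment_geodesic_stab].
Qed.

End Segments.

Arguments segment_geodesic {R d} G x y q.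

Theorem lemma40 (R : realType) (d : nat) (G : set 'M[R]_d)
  (HG : subgroup_Od G) (Hcl : closed_orbits G) (x y : 'cV[R]_d) :
  exists f : (Icc (qdist (gorbit G x) (gorbit G y)) -> set 'cV[R]_d) ->
             set 'cV[R]_d,
    set_bij (geodesics G (gorbit G x) (gorbit G y)) (stab_orbits G x y) f.
Proof.
exists (fun gam => [set p | argmin_orbit G x y p /\ segment_geodesic G x y p = gam]).
split.
- move=> _ /(geodesic_segment HG Hcl) [q xq ->].
  by exists q; rewrite (segment_geodesic_fiber HG Hcl xq).
- move=> _ _ /[!inE] /(geodesic_segment HG Hcl) [q1 xq1 ->]
    /(geodesic_segment HG Hcl) [q2 xq2 ->] fib.
  suff : [set p | argmin_orbit G x y p /\ segment_geodesic G x y p =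
    segment_geodesic G x y q2] q1 by case.
  by rewrite -fib.
- move=> _ [q [xq ->]]; exists (segment_geodesic G x y q).
    exact: segment_geodesicP.
  exact: segment_geodesic_fiber.
Qed.
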